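(* Let $E$ be a finite set and $\mathcal{A}$ a set-arrangement on $E$, with local Lie algebras $L_A=\mathcal{F}(A)/\langle R_A\rangle$, $R_A\subseteq[\mathcal{F}(A),\mathcal{F}(A)]$, for $A\in\mathcal{A}$, and let $\mathcal{L}=\mathcal{F}(E)/\langle R\rangle$ with $$R=\bigcup_{A\in\mathcal{A}}R_A\ \cup\ \{[x,y]:\ x,y\in E,\ \{x,y\}\not\subseteq A \text{ for every } A\in\mathcal{A}\}.$$ Assume $\mathcal{L}$ satisfies replacement. Let $\mathcal{B}_1,\dots,\mathcal{B}_k$ be pairwise disjoint subsets of $\mathcal{A}$, each closed in $\mathcal{A}$, with $\bigcup_{i=1}^k\mathcal{B}_i=\mathcal{A}$. For each $i$ let $\pi_{\mathcal{B}_i}:\mathcal{L}\to L_{\mathcal{B}_i}$ be the Lie homomorphism sending the elements of $E\setminus\mathrm{supp}(\mathcal{B}_i)$ to $0$ and fixing those of $\mathrm{supp}(\mathcal{B}_i)$, let $I_{\mathcal{B}_i}=\ker\pi_{\mathcal{B}_i}$, and let $J$ be the kernel of the surjective Lie homomorphism $\bigoplus_{i=1}^k\pi'_{\mathcal{B}_i}:\mathcal{L}'\to\bigoplus_{i=1}^kL'_{\mathcal{B}_i}$, where $\pi'_{\mathcal{B}_i}$ is the restriction of $\pi_{\mathcal{B}_i}$ to $\mathcal{L}'$. Then: (1) $J$ is generated as an ideal of $\mathcal{L}$ by the elements $[x,[y,z]]$ with $y,z\in\mathrm{supp}(\mathcal{B}_i)$, $x\in E\setminus\mathrm{supp}(\mathcal{B}_i)$,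 $i=1,\dots,k$; (2) $J=0$ if and only if $[x,[y,z]]=0$ in $\mathcal{L}$ for all $y,z\in\mathrm{supp}(\mathcal{B}_i)$, $x\in E\setminus\mathrm{supp}(\mathcal{B}_i)$, $i=1,\dots,k$; (3) for each $i=1,\dots,k$, $I_{\mathcal{B}_i}$ equals the Lie subalgebra of $\mathcal{L}$ generated by $E\setminus\mathrm{supp}(\mathcal{B}_i)$.
   Context: All Lie algebras are over a fixed field; $\mathcal{F}(X)$ is the free Lie algebra on $X$, $\langle S\rangle$ the ideal generated by $S$, and $M'=[M,M]$ the derived algebra. A set-arrangement on a finite set $E$ is a set $\mathcal{A}$ of subsets of $E$ with $|A|\ge3$ for all $A\in\mathcal{A}$ and $|A\cap B|\le1$ for distinct $A,B\in\mathcal{A}$. $\mathcal{L}$ satisfies replacement if for every $A\in\mathcal{A}$ and every $x\in A$ that also lies in some $B\in\mathcal{A}$ with $B\ne A$, one has $L_A'\subseteq$ the Lie subalgebra of $L_A$ generated by $A\setminus\{x\}$. For $\mathcal{B}\subseteq\mathcal{A}$ put $\mathrm{supp}(\mathcal{B})=\bigcup_{B\in\mathcal{B}}B$; $\mathcal{B}$ is closed in $\mathcal{A}$ if $|A\cap\mathrm{supp}(\mathcal{B})|\le1$ for all $A\in\mathcal{A}\setminus\mathcal{B}$. For such $\mathcal{B}$, $L_{\mathcal{B}}=\mathcal{F}(\mathrm{supp}(\mathcal{B}))/\langle R_{\mathcal{B}}\rangle$ where $R_{\mathcal{B}}=\bigcup_{B\in\mathcal{B}}R_B\cup\{[x,y]:\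 x,y\in\mathrm{supp}(\mathcal{B}),\ \{x,y\}\not\subseteq B\text{ for all }B\in\mathcal{B}\}$. Elements of $E$ are identified with their images in $\mathcal{L}$. *)

From HB Require Import structures.
From mathcomp Require Import all_boot all_order all_algebra.
Set Implicit Arguments. Unset Strict Implicit. Unset Printing Implicit Defensive.
Import GRing.Theory.
Local Open Scope ring_scope.

Section Lie.
Variable K : fieldType.

Record lie_axioms (V : lmodType K) (br : V -> V -> V) : Prop := LieAxioms {
  lie_linl : forall a (x y z : V), br (a *: x + y) z = a *: br x z + br y z;
  lie_linr : forall a (x y z : V), br z (a *: x + y) = a *: br z x + br z y;
  lie_alt : forall x, br x x = 0;
  lie_jacobi : forall x y z, br x (br y z) + br y (br z x) + br z (br x y) = 0 }.

Record lieAlg := LieAlg {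
  lie_carrier :> lmodType K;
  lie_br : lie_carrier -> lie_carrier -> lie_carrier;
  lie_ax : lie_axioms lie_br }.

Definition lie_hom (L M : lieAlg) (h : L -> M) : Prop :=
  (forall a (x y : L), h (a *: x + y) = a *: h x + h y) /\
  (forall x y : L, h (lie_br x y) = lie_br (h x) (h y)).

Definition subspace_closed (L : lieAlg) (P : L -> Prop) : Prop :=
  P 0 /\ forall a (x y : L), P x -> P y -> P (a *: x + y).
Definition subalg_closed (L : lieAlg) (P : L -> Prop) : Prop :=
  subspace_closed P /\ forall x y : L, P x -> P y -> P (lie_br x y).
Definition ideal_closed (L : lieAlg) (P : L -> Prop) : Prop :=
  subspace_closed P /\ forall x y : L, P y -> P (lie_br x y).

Definition derived (L : lieAlg) (v : L) : Prop :=
  forall P : L -> Prop, subspace_closed P -> (forall x y, P (lie_br x y)) -> P v.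
Definition gen_subalg (L : lieAlg) (S : L -> Prop) (v : L) : Prop :=
  forall P : L -> Prop, subalg_closed P -> (forall s, S s -> P s) -> P v.
Definition gen_ideal (L : lieAlg) (S : L -> Prop) (v : L) : Prop :=
  forall P : L -> Prop, ideal_closed P -> (forall s, S s -> P s) -> P v.

(* formal Lie expressions over generators X: they represent the elements
   of the free Lie algebra F(X) *)
Inductive lterm (X : Type) :=
  | LGen of X
  | LZero
  | LAdd of lterm X & lterm X
  | LScale of K & lterm X
  | LBr of lterm X & lterm X.

Fixpoint leval (L : lieAlg) (X : Type) (f : X -> L) (t : lterm X) : L :=
  match t with
  | LGen x => f x
  | LZero => 0
  | LAdd t1 t2 => leval f t1 + leval f t2
  | LScale a t1 => a *: leval f t1
  | LBr t1 t2 => lie_br (leval f t1) (leval f t2)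
  end.

Fixpoint lgens_in (X : finType) (S : {set X}) (t : lterm X) : Prop :=
  match t with
  | LGen x => x \in S
  | LZero => True
  | LAdd t1 t2 => lgens_in S t1 /\ lgens_in S t2
  | LScale _ t1 => lgens_in S t1
  | LBr t1 t2 => lgens_in S t1 /\ lgens_in S t2
  end.

(* (L, iota) is the Lie algebra F(S)/<rels> presented by generators S
   (a subset of X) and relations rels (terms in the generators S),
   characterised by its universal property. *)
Definition is_presentation (X : finType) (L : lieAlg) (iota : X -> L)
    (S : {set X}) (rels : lterm X -> Prop) : Prop :=
  (forall r, rels r -> leval iota r = 0) /\
  forall (M : lieAlg) (f : X -> M), (forall r, rels r -> leval f r = 0) ->
    exists h : L -> M,
      [/\ lie_hom h, (forall x, x \in S -> h (iota x) = f x) &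
        forall h' : L -> M, lie_hom h' ->
          (forall x, x \in S -> h' (iota x) = f x) -> forall v, h' v = h v].

End Lie.

Section Arr.
Variable E : finType.

Definition set_arrangement (cA : {set {set E}}) : Prop :=
  (forall A, A \in cA -> 3 <= #|A|)%N /\
  (forall A B, A \in cA -> B \in cA -> A != B -> #|A :&: B| <= 1)%N.

Definition supp (cB : {set {set E}}) : {set E} := \bigcup_(B in cB) B.

Definition closed_in (cA cB : {set {set E}}) : Prop :=
  forall A, A \in cA -> A \notin cB -> (#|A :&: supp cB| <= 1)%N.

Definition pres_rels (K : fieldType) (cB : {set {set E}})
    (RA : {set E} -> lterm K E -> Prop) (S : {set E}) (r : lterm K E) : Prop :=
  (exists2 B, B \in cB & RA B r) \/
  exists x y, [/\ x \in S, y \in S,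
    (forall B, B \in cB -> ~~ ((x \in B) && (y \in B))) &
    r = LBr (LGen K x) (LGen K y)].

(* replacement, phrased on the local Lie algebras L_A = F(A)/<R_A> *)
Definition replacement (K : fieldType) (cA : {set {set E}})
    (LA : {set E} -> lieAlg K) (iotaA : forall A, E -> LA A) : Prop :=
  forall A x, A \in cA -> x \in A ->
    (exists2 B, B \in cA & (B != A) && (x \in B)) ->
    forall v : LA A, derived v ->
      gen_subalg (fun w => exists y, y \in A :\ x /\ w = iotaA A y) v.

End Arr.

(* pi_i has a Lie section sigma_i : L_{B_i} -> L: closedness of B_i makes every
   relation of L_{B_i} hold in L.  By replacement, [x, y] with x in supp(B_i) and
   y outside lies in the subalgebra generated by E \ supp(B_i), so that subalgebra is
   an ideal of L; with sigma_i(L_{B_i}) it spans L, and pi_i kills it, which gives (3).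
   For (1), let I be the ideal generated by the [x, [y, z]]; it lies in J.  Every
   element of L' is congruent modulo I to a sum of sigma_i(u_i) with u_i in L'_{B_i}:
   a bracket of two generators is 0 or lies in a single sigma_i(L'_{B_i}), and
   bracketing sigma_i(L'_{B_i}) with a generator outside supp(B_i) lands in I.
   As pi_j kills sigma_i(L'_{B_i}) for i <> j and pi_j sigma_j = id, the u_i of an
   element of J vanish.  (2) follows from (1). *)

From HB Require Import structures.
From mathcomp Require Import all_boot all_order all_algebra boolp.
Set Implicit Arguments. Unset Strict Implicit. Unset Printing Implicit Defensive.
Import GRing.Theory.
Local Open Scope ring_scope.

Notation "⁅ x , y ⁆" := (lie_br x y) (format "⁅ x ,  y ⁆") : ring_scope.

(** * Lie algebras *)

Section Bracket.
Variables (K : fieldType) (L : lieAlg K).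
Implicit Types (x y z : L) (P S : L -> Prop).

Lemma brDl x y z : ⁅x + y, z⁆ = ⁅x, z⁆ + ⁅y, z⁆.
Proof. by have := lie_linl (lie_ax L) 1 x y z; rewrite !scale1r. Qed.

Lemma brDr x y z : ⁅z, x + y⁆ = ⁅z, x⁆ + ⁅z, y⁆.
Proof. by have := lie_linr (lie_ax L) 1 x y z; rewrite !scale1r. Qed.

Lemma br0l x : ⁅0, x⁆ = 0.
Proof. by apply: (addrI ⁅0, x⁆); rewrite addr0 -brDl addr0. Qed.

Lemma br0r x : ⁅x, 0⁆ = 0.
Proof. by apply: (addrI ⁅x, 0⁆); rewrite addr0 -brDr addr0. Qed.

Lemma brZl a x y : ⁅a *: x, y⁆ = a *: ⁅x, y⁆.
Proof. by have := lie_linl (lie_ax L) a x 0 y; rewrite addr0 br0l addr0. Qed.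

Lemma brZr a x y : ⁅y, a *: x⁆ = a *: ⁅y, x⁆.
Proof. by have := lie_linr (lie_ax L) a x 0 y; rewrite addr0 br0r addr0. Qed.

Lemma brNl x y : ⁅- x, y⁆ = - ⁅x, y⁆.
Proof. by rewrite -scaleN1r brZl scaleN1r. Qed.

Lemma brNr x y : ⁅y, - x⁆ = - ⁅y, x⁆.
Proof. by rewrite -scaleN1r brZr scaleN1r. Qed.

Lemma brBl x y z : ⁅x - y, z⁆ = ⁅x, z⁆ - ⁅y, z⁆.
Proof. by rewrite brDl brNl. Qed.

Lemma brBr x y z : ⁅z, x - y⁆ = ⁅z, x⁆ - ⁅z, y⁆.
Proof. by rewrite brDr brNr. Qed.

Lemma brxx x : ⁅x, x⁆ = 0.
Proof. exact: (lie_alt (lie_ax L)). Qed.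

Lemma brC x y : ⁅x, y⁆ = - ⁅y, x⁆.
Proof.
have := brxx (x + y); rewrite brDl !brDr !brxx add0r addr0 => /eqP.
by rewrite addr_eq0 => /eqP.
Qed.

Lemma br_leibniz x y z : ⁅x, ⁅y, z⁆⁆ = ⁅⁅x, y⁆, z⁆ + ⁅y, ⁅x, z⁆⁆.
Proof.
have jacobi := lie_jacobi (lie_ax L) x y z.
rewrite (brC ⁅x, y⁆ z) (brC x z) brNr.
by apply/eqP; rewrite -subr_eq0 -jacobi opprD !opprK -!addrA [⁅z, _⁆ + _]addrC.
Qed.

Lemma br_brl x y z : ⁅⁅x, y⁆, z⁆ = ⁅x, ⁅y, z⁆⁆ - ⁅y, ⁅x, z⁆⁆.
Proof. by rewrite br_leibniz addrK. Qed.

Lemma br_sumr I (r : seq I) (Q : pred I) (F : I -> L) x :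
  ⁅x, \sum_(i <- r | Q i) F i⁆ = \sum_(i <- r | Q i) ⁅x, F i⁆.
Proof. by apply: (big_morph (lie_br x)) => [u v|]; [exact: brDr | exact: br0r]. Qed.

Lemma subspace_closedD P x y : subspace_closed P -> P x -> P y -> P (x + y).
Proof. by case=> _ PD Px Py; rewrite -(scale1r x); apply: PD. Qed.

Lemma subspace_closedZ P a x : subspace_closed P -> P x -> P (a *: x).
Proof. by case=> P0 PD Px; rewrite -[_ *: x]addr0; apply: PD. Qed.

Lemma subspace_closedN P x : subspace_closed P -> P x -> P (- x).
Proof. by move=> sP Px; rewrite -scaleN1r; apply: subspace_closedZ. Qed.

Lemma subspace_closedB P x y : subspace_closed P -> P x -> P y -> P (x - y).
Proof. by move=> sP Px Py; apply: subspace_closedD (subspace_closedN _ _). Qed.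

Lemma subspace_closed_sum P I (r : seq I) (Q : pred I) (F : I -> L) :
  subspace_closed P -> (forall i, Q i -> P (F i)) -> P (\sum_(i <- r | Q i) F i).
Proof.
by move=> sP PF; apply: (big_ind P) => //; [case: sP | move=> u v; exact: subspace_closedD].
Qed.

Lemma ideal_closed_subalg P : ideal_closed P -> subalg_closed P.
Proof. by case=> sP PI; split=> // x y _; apply: PI. Qed.

Lemma ideal_closed_brl P x y : ideal_closed P -> P x -> P ⁅x, y⁆.
Proof. by case=> sP PI Px; rewrite brC; apply/(subspace_closedN sP)/PI. Qed.

Lemma ideal_brl_subalg P c : ideal_closed P -> subalg_closed (fun h => P ⁅h, c⁆).
Proof.
case=> sP PI; split; first split.
- by rewrite br0l; case: sP.
- by move=> a u v Pu Pv; rewrite (lie_linl (lie_ax L)); apply: sP.2.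
- by move=> u v Pu Pv; rewrite br_brl; apply: subspace_closedB => //; apply: PI.
Qed.

Lemma gen_ideal_closed S : ideal_closed (gen_ideal S).
Proof.
split; first split.
- by move=> P [[P0 _] _] _.
- by move=> a x y Sx Sy P PI PS; apply: PI.1.2; [apply: Sx | apply: Sy].
- by move=> x y Sy P PI PS; apply: PI.2; apply: Sy.
Qed.

Lemma mem_gen_ideal S s : S s -> gen_ideal S s.
Proof. by move=> Ss P _; apply. Qed.

Lemma gen_ideal_eq0 S :
  (forall v, gen_ideal S v -> v = 0) <-> (forall s, S s -> s = 0).
Proof.
split=> [S0 s /mem_gen_ideal/S0 //|S0 v Sv]; apply: (Sv (fun v => v = 0)); last exact: S0.
split; first split=> // a u w -> ->; first by rewrite scaler0 addr0.
by move=> u w ->; rewrite br0r.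
Qed.

Lemma gen_subalg_closed S : subalg_closed (gen_subalg S).
Proof.
split; first split.
- by move=> P [[P0 _] _] _.
- by move=> a x y Sx Sy P PS HS; apply: PS.1.2; [apply: Sx | apply: Sy].
- by move=> x y Sx Sy P PS HS; apply: PS.2; [apply: Sx | apply: Sy].
Qed.

Lemma mem_gen_subalg S s : S s -> gen_subalg S s.
Proof. by move=> Ss P _; apply. Qed.

Lemma gen_subalg_ad_stable S g :
  (forall s, S s -> gen_subalg S ⁅g, s⁆) ->
  forall p, gen_subalg S p -> gen_subalg S ⁅g, p⁆.
Proof.
move=> adS p Sp; have [sS brS] := gen_subalg_closed S.
have [] // := Sp (fun p => gen_subalg S p /\ gen_subalg S ⁅g, p⁆); last first.
  by move=> s Ss; split; [exact: mem_gen_subalg | exact: adS].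
split; first split.
- by rewrite br0r; split; case: sS.
- move=> a u v [Su Sgu] [Sv Sgv]; rewrite (lie_linr (lie_ax L)).
  by split; apply: sS.2.
- move=> u v [Su Sgu] [Sv Sgv]; rewrite br_leibniz.
  by split; [exact: brS | apply: (subspace_closedD sS); exact: brS].
Qed.

Lemma derived0 : derived (0 : L).
Proof. by move=> P [P0 _] _. Qed.

Lemma derivedD a x y : derived x -> derived y -> derived (a *: x + y).
Proof. by move=> Dx Dy P PS Pbr; apply: PS.2; [apply: Dx | apply: Dy]. Qed.

Lemma derived_br x y : derived ⁅x, y⁆.
Proof. by move=> P _; apply. Qed.

Section Generated.
Variables (G : L -> Prop) (L_gen : forall v, gen_subalg G v).

Lemma ideal_closed_from_gens P : subspace_closed P ->
  (forall g p, G g -> P p -> P ⁅g, p⁆) -> ideal_closed P.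
Proof.
move=> sP PG; split=> // l; apply: (@L_gen l (fun l => forall p, P p -> P ⁅l, p⁆)).
  split; first split.
  - by move=> p _; rewrite br0l; case: sP.
  - move=> a x y Px Py p Pp; rewrite (lie_linl (lie_ax L)).
    by apply: sP.2; [apply: Px | apply: Py].
  - by move=> x y Px Py p Pp; rewrite br_brl; apply: subspace_closedB; auto.
by move=> g Gg p; apply: PG.
Qed.

Lemma derived_from_gens P : ideal_closed P ->
  (forall g g', G g -> G g' -> P ⁅g, g'⁆) -> forall v, derived v -> P v.
Proof.
move=> [sP PI] PG.
have brl_gen g : G g -> forall a, P ⁅a, g⁆.
  move=> Gg a; apply: (@L_gen a (fun a => P ⁅a, g⁆)); last by move=> s Gs; apply: PG.
  exact: ideal_brl_subalg.
have br_all b a : P ⁅a, b⁆.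
  move: a; apply: (@L_gen b (fun b => forall a, P ⁅a, b⁆)); last exact: brl_gen.
  split; first split.
  - by move=> a; rewrite br0r; case: sP.
  - by move=> c x y Px Py a; rewrite (lie_linr (lie_ax L)); apply: sP.2.
  - by move=> x y Px Py a; rewrite br_leibniz; apply: subspace_closedD; auto.
by move=> v; apply=> // x y; apply: br_all.
Qed.

End Generated.
End Bracket.

Arguments derived0 {K L}.

(** * Homomorphisms *)

Section Hom.
Variables (K : fieldType) (L M : lieAlg K) (h : L -> M) (h_hom : lie_hom h).

Lemma homD x y : h (x + y) = h x + h y.
Proof. by have := h_hom.1 1 x y; rewrite !scale1r. Qed.

Lemma hom0 : h 0 = 0.
Proof. by apply: (addrI (h 0)); rewrite addr0 -homD addr0. Qed.

Lemma homZ a x : h (a *: x) = a *: h x.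
Proof. by have := h_hom.1 a x 0; rewrite addr0 hom0 addr0. Qed.

Lemma homB x y : h (x - y) = h x - h y.
Proof. by rewrite homD -scaleN1r homZ scaleN1r. Qed.

Lemma hom_br x y : h ⁅x, y⁆ = ⁅h x, h y⁆.
Proof. exact: h_hom.2. Qed.

Lemma hom_sum I (r : seq I) (P : pred I) (F : I -> L) :
  h (\sum_(i <- r | P i) F i) = \sum_(i <- r | P i) h (F i).
Proof. by apply: big_morph; [exact: homD | exact: hom0]. Qed.

Lemma hom_leval X (f : X -> L) t : h (leval f t) = leval (fun x => h (f x)) t.
Proof.
elim: t => //= [|t1 IH1 t2 IH2|a t IH|t1 IH1 t2 IH2].
- exact: hom0.
- by rewrite homD IH1 IH2.
- by rewrite homZ IH.
- by rewrite hom_br IH1 IH2.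
Qed.

Lemma ker_hom_ideal : ideal_closed (fun v => h v = 0).
Proof.
split; first split=> [|a x y hx hy]; first exact: hom0.
  by rewrite h_hom.1 hx hy scaler0 addr0.
by move=> x y hy; rewrite hom_br hy br0r.
Qed.

Lemma preim_subalg_closed (P : M -> Prop) :
  subalg_closed P -> subalg_closed (fun v => P (h v)).
Proof.
case=> [[P0 PD] Pbr]; split; first split=> [|a x y Px Py]; first by rewrite hom0.
  by rewrite h_hom.1; apply: PD.
by move=> x y Px Py; rewrite hom_br; apply: Pbr.
Qed.

End Hom.

Lemma hom_comp (K : fieldType) (L M N : lieAlg K) (h : L -> M) (g : M -> N) :
  lie_hom h -> lie_hom g -> lie_hom (fun x => g (h x)).
Proof.
by move=> h_hom g_hom; split=> [a x y|x y] /=; rewrite ?h_hom.1 ?h_hom.2 ?g_hom.1 ?g_hom.2.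
Qed.

Lemma hom_id (K : fieldType) (L : lieAlg K) : lie_hom (fun x : L => x).
Proof. by []. Qed.

Lemma hom_eq_on_gens (K : fieldType) (L M : lieAlg K) (G : L -> Prop) (h h' : L -> M) v :
  lie_hom h -> lie_hom h' -> (forall g, G g -> h g = h' g) -> gen_subalg G v -> h v = h' v.
Proof.
move=> h_hom h'_hom eqG Gv; apply: (Gv (fun v => h v = h' v)) => //; split; first split.
- by rewrite !hom0.
- by move=> a x y ex ey; rewrite h_hom.1 h'_hom.1 ex ey.
- by move=> x y ex ey; rewrite !hom_br // ex ey.
Qed.

Lemma ideal_add_image_subalg (K : fieldType) (L M : lieAlg K) (phi : M -> L) (H : L -> Prop) :
  lie_hom phi -> ideal_closed H -> subalg_closed (fun v => exists u, H (v - phi u)).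
Proof.
move=> phi_hom H_ideal; have [sH _] := H_ideal.
split; first split.
- by exists 0; rewrite hom0 // subr0; case: sH.
- move=> a v1 v2 [u1 H1] [u2 H2]; exists (a *: u1 + u2); rewrite phi_hom.1.
  rewrite opprD addrACA -scalerBr.
  exact: sH.2.
- move=> v1 v2 [u1 H1] [u2 H2]; exists ⁅u1, u2⁆; rewrite phi_hom.2.
  have -> : ⁅v1, v2⁆ - ⁅phi u1, phi u2⁆ =
      ⁅v1 - phi u1, v2⁆ + ⁅phi u1, v2 - phi u2⁆.
    by rewrite brBl brBr addrA subrK.
  by apply: (subspace_closedD sH); [exact: ideal_closed_brl | exact: H_ideal.2].
Qed.

(** * Presentations *)

Lemma leval_ext (K : fieldType) (L : lieAlg K) (X : finType) (S : {set X})
    (f g : X -> L) t :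
  lgens_in S t -> {in S, f =1 g} -> leval f t = leval g t.
Proof.
move=> + fg; elim: t => /= [x|_|t1 IH1 t2 IH2 [/IH1 -> /IH2 ->]|a t IH /IH ->|
  t1 IH1 t2 IH2 [/IH1 -> /IH2 ->]] //; exact: fg.
Qed.

Lemma lgens_in_sub (K : fieldType) (X : finType) (S T : {set X}) (t : lterm K X) :
  S \subset T -> lgens_in S t -> lgens_in T t.
Proof.
move=> /subsetP ST; elim: t => /= [x|_|t1 IH1 t2 IH2 [/IH1 ? /IH2 ?]|a t IH /IH ?|
  t1 IH1 t2 IH2 [/IH1 ? /IH2 ?]] //; exact: ST.
Qed.

Lemma lgens_in_setT (K : fieldType) (X : finType) (t : lterm K X) : lgens_in setT t.
Proof. by elim: t => //= *; rewrite in_setT. Qed.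

Section SubLie.
Variables (K : fieldType) (L : lieAlg K) (P : L -> Prop) (P_subalg : subalg_closed P).

Definition sub_lie := {v : L | P v}.
HB.instance Definition _ := gen_eqMixin sub_lie.
HB.instance Definition _ := gen_choiceMixin sub_lie.

Lemma sub_lie_inj (u v : sub_lie) : sval u = sval v -> u = v.
Proof. by case: u v => [u Pu] [v Pv] /= uv; subst v; congr exist; exact: Prop_irrelevance. Qed.

Let P_subspace : subspace_closed P := P_subalg.1.

Definition sub_lie0 : sub_lie := exist _ 0 P_subspace.1.
Definition sub_lie_add (u v : sub_lie) : sub_lie :=
  exist _ (sval u + sval v) (subspace_closedD P_subspace (svalP u) (svalP v)).
Definition sub_lie_opp (u : sub_lie) : sub_lie :=
  exist _ (- sval u) (subspace_closedN P_subspace (svalP u)).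
Definition sub_lie_scale a (u : sub_lie) : sub_lie :=
  exist _ (a *: sval u) (subspace_closedZ a P_subspace (svalP u)).
Definition sub_lie_br (u v : sub_lie) : sub_lie :=
  exist _ ⁅sval u, sval v⁆ (P_subalg.2 _ _ (svalP u) (svalP v)).

Lemma sub_lie_addA : associative sub_lie_add.
Proof. by move=> *; apply: sub_lie_inj; rewrite /= addrA. Qed.
Lemma sub_lie_addC : commutative sub_lie_add.
Proof. by move=> *; apply: sub_lie_inj; rewrite /= addrC. Qed.
Lemma sub_lie_add0 : left_id sub_lie0 sub_lie_add.
Proof. by move=> *; apply: sub_lie_inj; rewrite /= add0r. Qed.
Lemma sub_lie_addN : left_inverse sub_lie0 sub_lie_opp sub_lie_add.
Proof. by move=> *; apply: sub_lie_inj; rewrite /= addNr. Qed.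
HB.instance Definition _ :=
  GRing.isZmodule.Build sub_lie sub_lie_addA sub_lie_addC sub_lie_add0 sub_lie_addN.

Lemma sub_lie_scaleA a b v :
  sub_lie_scale a (sub_lie_scale b v) = sub_lie_scale (a * b) v.
Proof. by apply: sub_lie_inj; rewrite /= scalerA. Qed.
Lemma sub_lie_scale1 : left_id 1 sub_lie_scale.
Proof. by move=> *; apply: sub_lie_inj; rewrite /= scale1r. Qed.
Lemma sub_lie_scaleDr : right_distributive sub_lie_scale +%R.
Proof. by move=> *; apply: sub_lie_inj; rewrite /= scalerDr. Qed.
Lemma sub_lie_scaleDl v : {morph sub_lie_scale^~ v : a b / a + b}.
Proof. by move=> *; apply: sub_lie_inj; rewrite /= scalerDl. Qed.
HB.instance Definition _ := GRing.Zmodule_isLmodule.Build K sub_lie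
  sub_lie_scaleA sub_lie_scale1 sub_lie_scaleDr sub_lie_scaleDl.

Lemma sub_lie_axioms : lie_axioms sub_lie_br.
Proof.
split=> *; apply: sub_lie_inj => /=.
- exact: (lie_linl (lie_ax L)).
- exact: (lie_linr (lie_ax L)).
- exact: brxx.
- exact: (lie_jacobi (lie_ax L)).
Qed.

Definition subLie : lieAlg K := LieAlg sub_lie_axioms.

Lemma sval_hom : lie_hom (fun u : subLie => sval u).
Proof. by []. Qed.

End SubLie.

Lemma presentation_generated (K : fieldType) (X : finType) (L : lieAlg K)
    (iota : X -> L) (S : {set X}) (rels : lterm K X -> Prop) :
  is_presentation iota S rels -> (forall r, rels r -> lgens_in S r) ->
  forall v, gen_subalg (fun w => exists2 x, x \in S & w = iota x) v.
Proof.
(* Lift the generators into the subalgebra Q; by uniqueness, the lift followed by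
   [sval] is the identity. *)
move=> [rels0 univ] rels_gens v Q Q_subalg QS.
have Q_iota x : Q (if x \in S then iota x else 0).
  by case: ifP => xS; [apply: QS; exists x | case: Q_subalg => -[]].
pose f x : subLie Q_subalg := exist _ _ (Q_iota x).
have [|h [h_hom hS _]] := univ _ f.
  move=> r /[dup] /rels_gens r_gens /rels0 r0; apply: sub_lie_inj.
  rewrite (hom_leval (sval_hom Q_subalg)) /= -r0.
  by apply: leval_ext r_gens _ => x xS /=; rewrite xS.
have [h0 [_ _ uniq]] := univ L iota rels0.
have hv : sval (h v) = v.
  have fixS x : x \in S -> sval (h (iota x)) = iota x by move=> xS; rewrite hS //= xS.
  rewrite (uniq _ (hom_comp h_hom (sval_hom Q_subalg)) fixS v).
  exact/esym/(uniq _ (hom_id L)).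
by have := svalP (h v); rewrite hv.
Qed.

(** * Set-arrangements *)

Lemma closed_in_supp_inter (E : finType) (cA cB : {set {set E}}) A x y :
  closed_in cA cB -> A \in cA -> A \notin cB -> x \in A -> y \in A ->
  x \in supp cB -> y \in supp cB -> x = y.
Proof.
move=> cB_closed HA nAB xA yA xB yB.
by have /card_le1_eqP := cB_closed A HA nAB; apply; rewrite inE ?xA ?yA.
Qed.

Section Arrangement.
Context {K : fieldType} {E : finType} {cA : {set {set E}}}
  {RA : {set E} -> lterm K E -> Prop}
  {LA : {set E} -> lieAlg K} {iotaA : forall A, E -> LA A}
  {L : lieAlg K} {iota : E -> L}
  {k : nat} {cB : 'I_k -> {set {set E}}}
  {LB : 'I_k -> lieAlg K} {iotaB : forall i, E -> LB i}
  { pi : forall i, L -> LB i }.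
(* Automatic implicit arguments would look through [closed_in] and [replacement]
   and hide binders such as [A] and [i]. *)
Unset Implicit Arguments.
Hypothesis RA_gens : forall A r, A \in cA -> RA A r -> lgens_in A r.
Hypothesis LA_pres : forall A, A \in cA -> is_presentation (iotaA A) A (RA A).
Hypothesis L_pres : is_presentation iota setT (pres_rels cA RA setT).
Hypothesis cA_replacement : replacement cA iotaA.
Hypothesis cB_disjoint : forall i j, i != j -> [disjoint cB i & cB j].
Hypothesis cB_sub : forall i, cB i \subset cA.
Hypothesis cB_closed : forall i, closed_in cA (cB i).
Hypothesis cB_cover : \bigcup_i cB i = cA.
Hypothesis LB_pres : forall i,
  is_presentation (iotaB i) (supp (cB i)) (pres_rels (cB i) RA (supp (cB i))).
Hypothesis pi_spec : forall i, lie_hom (pi i) /\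
  forall x, pi i (iota x) = if x \in supp (cB i) then iotaB i x else 0.

Local Notation S i := (supp (cB i)).

Lemma pi_hom i : lie_hom (pi i).
Proof. exact: (pi_spec i).1. Qed.

Lemma pi_iota i x : pi i (iota x) = if x \in S i then iotaB i x else 0.
Proof. exact: (pi_spec i).2. Qed.

Lemma br_iota_collinear x y :
  (exists2 A, A \in cA & (x \in A) && (y \in A)) \/ ⁅iota x, iota y⁆ = 0.
Proof.
have [/exists_inP [A HA xyA]|no_A] := boolP [exists A in cA, (x \in A) && (y \in A)].
  by left; exists A.
right; apply: (L_pres.1 (LBr (LGen K x) (LGen K y))); right; exists x, y.
split; rewrite ?in_setT //.
by move=> A HA; apply: contraNN no_A => xyA; apply/exists_inP; exists A.
Qed.

Lemma L_generated v : gen_subalg (fun w => exists2 x, x \in [set: E] & w = iota x) v.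
Proof. by apply: (presentation_generated L_pres) => r _; apply: lgens_in_setT. Qed.

Lemma LB_generated i v : gen_subalg (fun w => exists2 x, x \in S i & w = iotaB i x) v.
Proof.
apply: (presentation_generated (LB_pres i)) => r [[B Bi RBr]|[x [y [xS yS _ ->]]]] //=.
by apply: lgens_in_sub (RA_gens B r (subsetP (cB_sub i) _ Bi) RBr); exact: bigcup_sup.
Qed.

Lemma sigma_ex i : exists h : LB i -> L,
  lie_hom h /\ forall x, x \in S i -> h (iotaB i x) = iota x.
Proof.
have [|h [h_hom hS _]] := (LB_pres i).2 L iota; last by exists h.
move=> r [[B Bi RBr]|[x [y [xS yS xy_sep ->]]]] /=.
  by apply: L_pres.1; left; exists B => //; apply: (subsetP (cB_sub i)).
have [->|nxy] := eqVneq x y; first exact: brxx.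
have [[A HA /andP [xA yA]]|-> //] := br_iota_collinear x y.
have nAi : A \notin cB i by apply/negP => /xy_sep; rewrite xA yA.
by move: nxy; rewrite (closed_in_supp_inter (cB_closed i) HA nAi xA yA xS yS) eqxx.
Qed.

Definition sigma i : LB i -> L := sval (cid (sigma_ex i)).

Lemma sigma_hom i : lie_hom (sigma i).
Proof. exact: (svalP (cid (sigma_ex i))).1. Qed.

Lemma sigma_iota i x : x \in S i -> sigma i (iotaB i x) = iota x.
Proof. exact: (svalP (cid (sigma_ex i))).2. Qed.

Lemma pi_sigma i u : pi i (sigma i u) = u.
Proof.
apply: (hom_eq_on_gens (hom_comp (sigma_hom i) (pi_hom i)) (hom_id _) _ (LB_generated i u)).
by move=> _ [x xS ->] /=; rewrite sigma_iota // pi_iota xS.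
Qed.

Lemma pi_br_iota_other i j y z : i != j -> y \in S i -> z \in S i ->
  ⁅pi j (iota y), pi j (iota z)⁆ = 0.
Proof.
move=> nij yS zS; rewrite !pi_iota.
case: ifP => yj; last by rewrite br0l.
case: ifP => zj; last by rewrite br0r.
have [->|nyz] := eqVneq y z; first exact: brxx.
apply: ((LB_pres j).1 (LBr (LGen K y) (LGen K z))); right; exists y, z.
split=> // B Bj; apply/negP => /andP [yB zB].
have nBi : B \notin cB i.
  by apply: contraTN Bj => Bi; rewrite (disjointFr (cB_disjoint i j nij) Bi).
have BA := subsetP (cB_sub j) _ Bj.
by move: nyz; rewrite (closed_in_supp_inter (cB_closed i) BA nBi yB zB yS zS) eqxx.
Qed.

Lemma pi_sigma_other i j u : i != j -> derived u -> pi j (sigma i u) = 0.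
Proof.
move=> nij; have hom_ij := hom_comp (sigma_hom i) (pi_hom j).
apply: (derived_from_gens (LB_generated i) (ker_hom_ideal hom_ij)).
move=> _ _ [y yS ->] [z zS ->].
by rewrite (hom_br hom_ij) /= !sigma_iota // (pi_br_iota_other i j).
Qed.

Definition out_gens i (w : L) := exists x, x \notin S i /\ w = iota x.
Definition out_subalg i := gen_subalg (out_gens i).

Lemma mem_out_subalg i x : x \notin S i -> out_subalg i (iota x).
Proof. by move=> xS; apply: mem_gen_subalg; exists x. Qed.

Lemma br_iota_out_subalg i x y :
  x \in S i -> y \notin S i -> out_subalg i ⁅iota x, iota y⁆.
Proof.
move=> xS yS; have [[A HA /andP [xA yA]]|->] := br_iota_collinear x y; last first.
  by case: (gen_subalg_closed (out_gens i)) => -[].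
have nAi : A \notin cB i by apply: contra yS => Ai; apply/bigcupP; exists A.
have [B Bi xB] := bigcupP xS.
have x_shared : exists2 B, B \in cA & (B != A) && (x \in B).
  by exists B; [exact: (subsetP (cB_sub i)) | rewrite xB andbT; apply: contraNneq nAi => <-].
have [rho [rho_hom rho_iota _]] := (LA_pres A HA).2 L iota
  (fun r RAr => L_pres.1 r (or_introl (ex_intro2 _ _ A HA RAr))).
rewrite -!rho_iota // -(hom_br rho_hom).
apply: (cA_replacement A x HA xA x_shared _ (derived_br _ _) (fun w => out_subalg i (rho w))).
  exact/(preim_subalg_closed rho_hom)/gen_subalg_closed.
move=> _ [z [/setD1P [zx zA] ->]]; rewrite rho_iota //; apply: mem_out_subalg.
apply: contra zx => zS; apply/eqP.
exact: (closed_in_supp_inter (cB_closed i) HA nAi zA xA zS xS).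
Qed.

Lemma out_subalg_ideal i : ideal_closed (out_subalg i).
Proof.
have [sOut brOut] := gen_subalg_closed (out_gens i).
apply: (ideal_closed_from_gens L_generated sOut) => _ p [x _ ->].
have [xS|xS] := boolP (x \in S i); last exact: brOut (mem_out_subalg i x xS).
by apply: gen_subalg_ad_stable => _ [y [yS ->]]; exact: br_iota_out_subalg.
Qed.

Lemma out_subalg_ker i v : out_subalg i v -> pi i v = 0.
Proof.
move=> Ov; apply: Ov (ideal_closed_subalg (ker_hom_ideal (pi_hom i))) _.
by move=> _ [x [xS ->]]; rewrite pi_iota (negbTE xS).
Qed.

Lemma ker_pi_eq_out_subalg i v : pi i v = 0 <-> out_subalg i v.
Proof.
split=> [piv|]; last exact: out_subalg_ker.
have [u Ou] : exists u, out_subalg i (v - sigma i u).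
  apply: (L_generated v _ (ideal_add_image_subalg (sigma_hom i) (out_subalg_ideal i))).
  move=> _ [x _ ->]; have [xS|xS] := boolP (x \in S i).
    by exists (iotaB i x); rewrite sigma_iota // subrr; case: (out_subalg_ideal i) => -[].
  by exists 0; rewrite (hom0 (sigma_hom i)) subr0; exact: mem_out_subalg.
have := out_subalg_ker i _ Ou; rewrite (homB (pi_hom i)) piv pi_sigma sub0r => /eqP.
by rewrite oppr_eq0 => /eqP u0; move: Ou; rewrite u0 (hom0 (sigma_hom i)) subr0.
Qed.

Definition cross_br (w : L) := exists i x y z,
  [/\ y \in S i, z \in S i, x \notin S i & w = ⁅iota x, ⁅iota y, iota z⁆⁆].
Definition J (v : L) := derived v /\ forall i, pi i v = 0.
Local Notation I := (gen_ideal cross_br).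

Lemma J_ideal : ideal_closed J.
Proof.
split; first split.
- by split=> [|i]; [exact: derived0 | exact: (hom0 (pi_hom i))].
- move=> a x y [dx px] [dy py]; split=> [|i]; first exact: derivedD.
  by rewrite (pi_hom i).1 px py scaler0 addr0.
- move=> x y [dy py]; split=> [|i]; first exact: derived_br.
  by rewrite (hom_br (pi_hom i)) py br0r.
Qed.

Lemma cross_br_J w : cross_br w -> J w.
Proof.
move=> [i [x [y [z [yS zS xS ->]]]]]; split=> [|j]; first exact: derived_br.
rewrite !(hom_br (pi_hom j)); have [<-|nij] := eqVneq i j.
  by rewrite pi_iota (negbTE xS) br0l.
by rewrite (pi_br_iota_other i j y z nij yS zS) br0r.
Qed.

Lemma gen_ideal_cross_br_J v : I v -> J v.
Proof. by move=> Iv; apply: Iv J_ideal cross_br_J. Qed.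

Lemma br_out_subalg_sigma i h u : out_subalg i h -> derived u -> I ⁅h, sigma i u⁆.
Proof.
have [sI brI] := gen_ideal_closed cross_br.
move=> Oh du; move: h Oh.
apply: (derived_from_gens (LB_generated i)
  (P := fun u => forall h, out_subalg i h -> I ⁅h, sigma i u⁆)) du.
- apply: (ideal_closed_from_gens (LB_generated i)).
    split=> [h _|a u1 u2 P1 P2 h Oh]; first by rewrite (hom0 (sigma_hom i)) br0r; case: sI.
    by rewrite (sigma_hom i).1 (lie_linr (lie_ax L)); apply: sI.2; [exact: P1 | exact: P2].
  move=> _ p [z zS ->] /= Pp h Oh; rewrite (hom_br (sigma_hom i)) sigma_iota // br_leibniz.
  apply: (subspace_closedD sI); last exact: brI (Pp _ Oh).
  exact: Pp (ideal_closed_brl _ (out_subalg_ideal i) Oh).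
- move=> _ _ [y yS ->] [z zS ->] h Oh; rewrite (hom_br (sigma_hom i)) !sigma_iota //.
  apply: (Oh _ (ideal_brl_subalg _ (gen_ideal_closed cross_br))) => _ [x [xS ->]].
  by apply: mem_gen_ideal; exists i, x, y, z.
Qed.

Definition decomposable (v : L) := exists w : 'I_k -> L,
  (forall i, exists2 u, derived u & w i = sigma i u) /\ I (v - \sum_i w i).

Lemma decomposable_subspace : subspace_closed decomposable.
Proof.
have [sI _] := gen_ideal_closed cross_br.
split.
  exists (fun=> 0); split=> [i|]; last by rewrite big1 // subr0; case: sI.
  by exists 0; [exact: derived0 | rewrite (hom0 (sigma_hom i))].
move=> a v1 v2 [w1 [w1_sigma I1]] [w2 [w2_sigma I2]].
exists (fun i => a *: w1 i + w2 i); split=> [i|].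
  have [u1 du1 ->] := w1_sigma i; have [u2 du2 ->] := w2_sigma i.
  by exists (a *: u1 + u2); [exact: derivedD | rewrite (sigma_hom i).1].
rewrite big_split /= -scaler_sumr opprD addrACA -scalerBr.
exact: sI.2.
Qed.

Lemma decomposable_ideal : ideal_closed decomposable.
Proof.
have [sI brI] := gen_ideal_closed cross_br.
apply: (ideal_closed_from_gens L_generated decomposable_subspace).
move=> _ v [x _ ->] [w [w_sigma Iv]].
pose w' i := if x \in S i then ⁅iota x, w i⁆ else 0.
exists w'; split=> [i|].
  have [u du wi] := w_sigma i; rewrite /w' wi; case: ifP => xS.
    exists ⁅iotaB i x, u⁆; first exact: derived_br.
    by rewrite (hom_br (sigma_hom i)) sigma_iota.
  by exists 0; [exact: derived0 | rewrite (hom0 (sigma_hom i))].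
have -> : ⁅iota x, v⁆ - \sum_i w' i =
    ⁅iota x, v - \sum_i w i⁆ + \sum_i (⁅iota x, w i⁆ - w' i).
  by rewrite brBr br_sumr sumrB addrA subrK.
apply: (subspace_closedD sI); first exact: brI.
apply: (subspace_closed_sum _ sI) => i _; rewrite /w'.
case: ifP => [_|/negbT xS]; first by rewrite subrr; case: sI.
have [u du ->] := w_sigma i; rewrite subr0.
exact: br_out_subalg_sigma (mem_out_subalg i x xS) du.
Qed.

Lemma decomposable_br_iota x y : decomposable ⁅iota x, iota y⁆.
Proof.
have [[A HA /andP [xA yA]]|->] := br_iota_collinear x y; last exact: decomposable_subspace.1.
have /bigcupP [i _ Ai] : A \in \bigcup_i cB i by rewrite cB_cover.
have xS : x \in S i by apply/bigcupP; exists A.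
have yS : y \in S i by apply/bigcupP; exists A.
exists (fun j => if j == i then ⁅iota x, iota y⁆ else 0); split=> [j|].
  case: eqP => [->|_]; last by exists 0; [exact: derived0 | rewrite (hom0 (sigma_hom j))].
  exists ⁅iotaB i x, iotaB i y⁆; first exact: derived_br.
  by rewrite (hom_br (sigma_hom i)) !sigma_iota.
by rewrite -big_mkcond big_pred1_eq subrr; case: (gen_ideal_closed cross_br) => -[].
Qed.

Lemma derived_decomposable v : derived v -> decomposable v.
Proof.
apply: (derived_from_gens L_generated decomposable_ideal) => _ _ [x _ ->] [y _ ->].
exact: decomposable_br_iota.
Qed.

Lemma J_eq_gen_ideal v : J v <-> I v.
Proof.
split=> [[dv piv]|]; last exact: gen_ideal_cross_br_J.
have [w [w_sigma Iv]] := derived_decomposable v dv.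
suff w0 j : w j = 0 by move: Iv; rewrite big1 ?subr0 // => j _; exact: w0.
have [u du wj] := w_sigma j.
have := (gen_ideal_cross_br_J _ Iv).2 j.
rewrite (homB (pi_hom j)) piv sub0r (hom_sum (pi_hom j)) (bigD1 j) //= big1 => [|i nij].
  rewrite addr0 wj pi_sigma => /eqP; rewrite oppr_eq0 => /eqP ->.
  exact: (hom0 (sigma_hom j)).
by have [u' du' ->] := w_sigma i; exact: pi_sigma_other.
Qed.

End Arrangement.

Theorem mainTheorem3 (K : fieldType) (E : finType) (cA : {set {set E}})
  (RA : {set E} -> lterm K E -> Prop)
  (F : {set E} -> lieAlg K) (iotaF : forall A, E -> F A)
  (LA : {set E} -> lieAlg K) (iotaA : forall A, E -> LA A)
  (L : lieAlg K) (iota : E -> L)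
  (k : nat) (cB : 'I_k -> {set {set E}})
  (LB : 'I_k -> lieAlg K) (iotaB : forall i, E -> LB i)
  (pi : forall i, L -> LB i) :
  set_arrangement cA ->
  (* F(A) is the free Lie algebra on A *)
  (forall A, A \in cA -> is_presentation (iotaF A) A (fun _ => False)) ->
  (* R_A consists of elements of [F(A), F(A)] *)
  (forall A r, A \in cA -> RA A r -> lgens_in A r /\ derived (leval (iotaF A) r)) ->
  (* L_A = F(A)/<R_A> *)
  (forall A, A \in cA -> is_presentation (iotaA A) A (RA A)) ->
  (* \mathcal L = F(E)/<R> *)
  is_presentation iota setT (pres_rels cA RA setT) ->
  replacement cA iotaA ->
  (forall i j, i != j -> [disjoint cB i & cB j]) ->
  (forall i, cB i \subset cA) ->
  (forall i, closed_in cA (cB i)) ->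
  \bigcup_i cB i = cA ->
  (* L_{B_i} = F(supp B_i)/<R_{B_i}> *)
  (forall i, is_presentation (iotaB i) (supp (cB i)) (pres_rels (cB i) RA (supp (cB i)))) ->
  (* pi_{B_i} *)
  (forall i, lie_hom (pi i) /\
     forall x, pi i (iota x) = if x \in supp (cB i) then iotaB i x else 0) ->
  let J := fun v : L => derived v /\ forall i, pi i v = 0 in
  let T := fun w : L => exists i x y z,
      [/\ y \in supp (cB i), z \in supp (cB i), x \notin supp (cB i) &
          w = lie_br (iota x) (lie_br (iota y) (iota z))] in
  [/\ (forall v, J v <-> gen_ideal T v),
      ((forall v, J v -> v = 0) <->
         (forall i x y z, y \in supp (cB i) -> z \in supp (cB i) ->
            x \notin supp (cB i) ->
            lie_br (iota x) (lie_br (iota y) (iota z)) = 0)) &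
      (forall i (v : L), pi i v = 0 <->
         gen_subalg (fun w => exists x, x \notin supp (cB i) /\ w = iota x) v)].
Proof.
move=> _ _ RA_derived LA_pres L_pres cA_rep cB_disj cB_sub cB_closed cB_cover LB_pres
  pi_spec J T.
have RA_gens A r HA RAr : lgens_in A r := (RA_derived A r HA RAr).1.
have J_eq_T := J_eq_gen_ideal RA_gens LA_pres L_pres cA_rep cB_disj cB_sub cB_closed
  cB_cover LB_pres pi_spec.
split=> [|| i v]; first exact: J_eq_T.
- split=> [J0 i x y z yS zS xS|T0 v /J_eq_T]; last first.
    by move: v; apply/gen_ideal_eq0 => _ [i [x [y [z [yS zS xS ->]]]]]; exact: (T0 i).
  by apply/J0/J_eq_T; apply: mem_gen_ideal; exists i, x, y, z.
- exact: (ker_pi_eq_out_subalg RA_gens LA_pres L_pres cA_rep cB_sub cB_closed LB_pres pi_spec).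
Qed.
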